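(* Let $S$ be a polygonal domain and $P\in\mathcal{F}_2[S]$. Then $P$ can be normalized to a boundary configuration by a feasible schedule within $S$ in which neither robot makes a turn, and $P$ can be normalized to a corner configuration by a feasible schedule within $S$ in which each robot makes at most one turn.
   Context: A polygonal domain is a closed region bounded by an outer simple polygon, possibly containing polygonal holes. Robots are axis-parallel unit squares: a robot at $p$ occupies $p+\boxdot$, $\boxdot=\{q:\|q\|_\infty\le1/2\}$. A configuration of two robots is a pair $(p_1,p_2)$ with $\|p_1-p_2\|_\infty\ge1$; it is in $S$ if the interior of each robot is contained in $S$; $\mathcal{F}_2[S]$ is the set of such configurations. The inner Minkowski sum is $\mathrm{inner}(S)=\{x\in S:\min_{y\in\partial S}\|y-x\|_\infty\ge 1/2\}$, where $\partial S$ is the boundary of $S$. A configuration $(p_1,p_2)\in\mathcal{F}_2[S]$ is a boundary configuration if $p_1,p_2$ both lie on the boundary of $\mathrm{inner}(S)$, and a corner configuration if both lie at vertices of $\mathrm{inner}(S)$. A trajectory over $T$ is a $1$-Lipschitz (w.r.t. $L_1$) map $m:T\to\mathbb{R}^2$ with polygonal-chain image; a turn is a point of the image where two segments of different orientations meet. A schedule $(m_1,m_2)$ is feasible within $S$ if all its configurations lie in $\mathcal{F}_2[S]$. The orderings are $\{x(p_1)\ge x(p_2)+1\}$, $\{x(p_2)\ge x(p_1)+1\}$, $\{y(p_1)\ge y(p_2)+1\}$, $\{y(p_2)\ge y(p_1)+1\}$; two configurations are commonly ordered if they lie in a common ordering. Normalizing $P$ to a boundary (resp. corner) configuration means transforming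 it, by a feasible schedule within $S$, into a boundary (resp. corner) configuration commonly ordered with $P$. *)

From Stdlib Require Import Reals Lra List.
Import ListNotations.
Open Scope R_scope.

Definition pt : Type := (R * R)%type.
Definition origin : pt := (0, 0).

Definition linf (p q : pt) : R :=
  Rmax (Rabs (fst p - fst q)) (Rabs (snd p - snd q)).
Definition l1 (p q : pt) : R :=
  Rabs (fst p - fst q) + Rabs (snd p - snd q).

Definition on_seg (a b x : pt) : Prop :=
  exists t, 0 <= t <= 1 /\
    x = (fst a + t * (fst b - fst a), snd a + t * (snd b - snd a)).

Definition pvert (vs : list pt) (i : nat) : pt := nth i vs origin.
Definition pedge (vs : list pt) (i : nat) (x : pt) : Prop :=
  on_seg (pvert vs i) (pvert vs (S i mod length vs)) x.

Definition poly_bd (vs : list pt) (x : pt) : Prop :=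
  exists i, (i < length vs)%nat /\ pedge vs i x.

Definition simple_polygon (vs : list pt) : Prop :=
  (3 <= length vs)%nat /\ NoDup vs /\
  forall i j, (i < length vs)%nat -> (j < length vs)%nat -> i <> j ->
    (j = (S i mod length vs)%nat ->
       forall x, pedge vs i x -> pedge vs j x -> x = pvert vs j) /\
    (j <> (S i mod length vs)%nat -> i <> (S j mod length vs)%nat ->
       forall x, ~ (pedge vs i x /\ pedge vs j x)).

Fixpoint chain_avoid (C : pt -> Prop) (l : list pt) : Prop :=
  match l with
  | a :: ((b :: _) as r) => (forall z, on_seg a b z -> ~ C z) /\ chain_avoid C r
  | _ => True
  end.

Definition path_avoid (C : pt -> Prop) (x y : pt) : Prop :=
  exists l : list pt, chain_avoid C (x :: l ++ [y]).

(* interior of a simple polygon: the points off its boundary that cannot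
   be joined to points arbitrarily far away without crossing the boundary
   (the bounded component of the complement of the curve) *)
Definition poly_inside (vs : list pt) (x : pt) : Prop :=
  ~ poly_bd vs x /\
  ~ (forall M, exists y, M < linf y origin /\ path_avoid (poly_bd vs) x y).

Definition poly_region (vs : list pt) (x : pt) : Prop :=
  poly_bd vs x \/ poly_inside vs x.

Definition polygonal_domain (S : pt -> Prop) : Prop :=
  exists (outer : list pt) (holes : list (list pt)),
    simple_polygon outer /\
    Forall simple_polygon holes /\
    (forall h, In h holes -> forall x, poly_region h x -> poly_inside outer x) /\
    (forall i j, (i < j)%nat -> (j < length holes)%nat ->
       forall x, ~ (poly_region (nth i holes nil) x /\
                    poly_region (nth j holes nil) x)) /\
    (forall x, S x <-> (poly_region outer x /\
                        forall h, In h holes -> ~ poly_inside h x)).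

Definition bdry (A : pt -> Prop) (x : pt) : Prop :=
  forall e, 0 < e ->
    (exists y, linf x y < e /\ A y) /\ (exists y, linf x y < e /\ ~ A y).

(* inner Minkowski sum: points of S at L_inf distance >= 1/2 from dS *)
Definition inner (S : pt -> Prop) (x : pt) : Prop :=
  S x /\ forall y, bdry S y -> 1 / 2 <= linf y x.

(* vertex of a (polygonal) set A: a boundary point near which the boundary
   of A is not a single straight line through the point *)
Definition vertex_of (A : pt -> Prop) (p : pt) : Prop :=
  bdry A p /\
  ~ (exists e (d : pt), 0 < e /\ d <> origin /\
       forall q, linf q p < e ->
         (bdry A q <-> exists t, q = (fst p + t * fst d, snd p + t * snd d))).

(* the interior of the robot (open unit square) at p lies in S *)
Definition robot_in (S : pt -> Prop) (p : pt) : Prop :=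
  forall q, linf q p < 1 / 2 -> S q.

Definition config_in (S : pt -> Prop) (p1 p2 : pt) : Prop :=
  1 <= linf p1 p2 /\ robot_in S p1 /\ robot_in S p2.

Definition boundary_config (S : pt -> Prop) (p1 p2 : pt) : Prop :=
  config_in S p1 p2 /\ bdry (inner S) p1 /\ bdry (inner S) p2.

Definition corner_config (S : pt -> Prop) (p1 p2 : pt) : Prop :=
  config_in S p1 p2 /\ vertex_of (inner S) p1 /\ vertex_of (inner S) p2.

(* the four orderings; two configurations are commonly ordered if they
   lie in a common ordering *)
Definition commonly_ordered (p1 p2 q1 q2 : pt) : Prop :=
  (fst p1 >= fst p2 + 1 /\ fst q1 >= fst q2 + 1) \/
  (fst p2 >= fst p1 + 1 /\ fst q2 >= fst q1 + 1) \/
  (snd p1 >= snd p2 + 1 /\ snd q1 >= snd q2 + 1) \/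
  (snd p2 >= snd p1 + 1 /\ snd q2 >= snd q1 + 1).

Fixpoint chain_pts (l : list pt) (x : pt) : Prop :=
  match l with
  | [] => False
  | [a] => x = a
  | a :: ((b :: _) as r) => on_seg a b x \/ chain_pts r x
  end.

Definition image (T : R) (m : R -> pt) (x : pt) : Prop :=
  exists t, 0 <= t <= T /\ x = m t.

Definition trajectory (T : R) (m : R -> pt) : Prop :=
  (forall s t, 0 <= s <= T -> 0 <= t <= T -> l1 (m s) (m t) <= Rabs (s - t)) /\
  exists l : list pt, forall x, image T m x <-> chain_pts l x.

(* a turn: a point x of the image where two (non-degenerate) segments of
   the image with different orientations meet *)
Definition turn (T : R) (m : R -> pt) (x : pt) : Prop :=
  image T m x /\
  exists u v : pt, u <> x /\ v <> x /\
    (forall z, on_seg x u z -> image T m z) /\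
    (forall z, on_seg x v z -> image T m z) /\
    (fst u - fst x) * (snd v - snd x) - (snd u - snd x) * (fst v - fst x) <> 0.

Definition no_turn (T : R) (m : R -> pt) : Prop := forall x, ~ turn T m x.
Definition at_most_one_turn (T : R) (m : R -> pt) : Prop :=
  forall x y, turn T m x -> turn T m y -> x = y.

Definition normalizable (S : pt -> Prop) (Good : pt -> pt -> Prop)
    (TurnOK : R -> (R -> pt) -> Prop) (p1 p2 : pt) : Prop :=
  exists (T : R) (m1 m2 : R -> pt),
    0 <= T /\ trajectory T m1 /\ trajectory T m2 /\
    TurnOK T m1 /\ TurnOK T m2 /\
    m1 0 = p1 /\ m2 0 = p2 /\
    (forall t, 0 <= t <= T -> config_in S (m1 t) (m2 t)) /\
    Good (m1 T) (m2 T) /\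
    commonly_ordered p1 p2 (m1 T) (m2 T).

(* Choose an axis direction e along which p1 is at least 1 ahead of p2. Robot 1 moves along e
   and robot 2 along -e until each hits the boundary of inner(S), which is exactly the set of
   feasible robot positions; this happens because S is bounded. For corners, each robot then
   slides along the boundary line it has hit, in the orientation that does not decrease its
   e-component, until the boundary stops being a line through its position, i.e. at a vertex;
   the only possible turn is where the slide begins. Since robot 1 never loses e-component and
   robot 2 never gains it, the e-separation stays at least 1: the robots never collide, and the
   final configuration lies in the same ordering as the initial one. *)

From Stdlib Require Import Reals Lra List Classical.
Import ListNotations.
Open Scope R_scope.

Ltac split_minmax :=
  repeat match goal with
  | |- context [Rle_dec ?a ?b] => destruct (Rle_dec a b)
  | |- context [Rcase_abs ?a] => destruct (Rcase_abs a)
  | H : context [Rle_dec ?a ?b] |- _ => destruct (Rle_dec a b)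
  | H : context [Rcase_abs ?a] |- _ => destruct (Rcase_abs a)
  end.
Ltac minmax_lra := unfold linf, l1, Rmax, Rmin, Rabs in *; split_minmax; lra.

Definition shift (p : pt) (t : R) (d : pt) : pt :=
  (fst p + t * fst d, snd p + t * snd d).
Definition scale (c : R) (q : pt) : pt := (c * fst q, c * snd q).
Definition diff (a b : pt) : pt := (fst a - fst b, snd a - snd b).
Definition opp (d : pt) : pt := (- fst d, - snd d).
Definition dot (a b : pt) : R := fst a * fst b + snd a * snd b.
Definition cross (a b : pt) : R := fst a * snd b - snd a * fst b.
Definition norm1 (d : pt) : R := Rabs (fst d) + Rabs (snd d).

Lemma shift_0 p d : shift p 0 d = p.
Proof. destruct p; unfold shift; simpl; f_equal; ring. Qed.

Lemma shift_shift p s t d : shift (shift p s d) t d = shift p (s + t) d.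
Proof. unfold shift; simpl; f_equal; ring. Qed.

Lemma shift_scale p s k d : shift p s (scale k d) = shift p (s * k) d.
Proof. unfold shift, scale; simpl; f_equal; ring. Qed.

Lemma shift_diff p q : shift p 1 (diff q p) = q.
Proof. destruct p, q; unfold shift, diff; simpl; f_equal; ring. Qed.

Lemma shift_proportional x a b u d c :
  shift x a u = shift x b d -> shift x (c * a) u = shift x (c * b) d.
Proof.
  unfold shift; intros E; injection E as E1 E2.
  f_equal; rewrite !Rmult_assoc; [rewrite <- (Rplus_eq_reg_l _ _ _ E1)
                                 | rewrite <- (Rplus_eq_reg_l _ _ _ E2)]; reflexivity.
Qed.

Lemma linf_pp p : linf p p = 0.
Proof. minmax_lra. Qed.

Lemma linf_ge0 p q : 0 <= linf p q.
Proof. minmax_lra. Qed.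

Lemma linf_sym p q : linf p q = linf q p.
Proof. unfold linf; rewrite (Rabs_minus_sym (fst p)), (Rabs_minus_sym (snd p)); auto. Qed.

Lemma linf_triangle x y z : linf x z <= linf x y + linf y z.
Proof. minmax_lra. Qed.

Lemma linf_scale c q : linf (scale c q) origin = Rabs c * linf q origin.
Proof.
  unfold linf, scale, origin; simpl; rewrite !Rminus_0_r, !Rabs_mult.
  apply RmaxRmult, Rabs_pos.
Qed.

Lemma linf_shift p s t d : linf (shift p s d) (shift p t d) = Rabs (s - t) * linf d origin.
Proof.
  unfold linf, shift, origin; simpl; rewrite !Rminus_0_r, <- RmaxRmult by apply Rabs_pos.
  rewrite <- !Rabs_mult; f_equal; f_equal; ring.
Qed.

Lemma linf_shift_base p t d : linf (shift p t d) p = Rabs t * linf d origin.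
Proof. rewrite <- (shift_0 p d) at 2; rewrite linf_shift, Rminus_0_r; reflexivity. Qed.

Lemma linf_shift_lt p s t d e : 0 < e -> Rabs (s - t) < e / (1 + linf d origin) ->
  linf (shift p s d) (shift p t d) < e.
Proof.
  intros He Hst; rewrite linf_shift.
  pose proof (linf_ge0 d origin); pose proof (Rabs_pos (s - t)).
  apply (Rmult_lt_compat_r (1 + linf d origin)) in Hst; [|lra].
  unfold Rdiv in Hst; rewrite Rmult_assoc, Rinv_l, Rmult_1_r in Hst by lra; nra.
Qed.

Lemma norm1_pos d : d <> origin -> 0 < norm1 d.
Proof.
  destruct d as [d1 d2]; unfold norm1, origin; simpl; intros Hd.
  destruct (Req_dec d1 0) as [->|H1]; [destruct (Req_dec d2 0) as [->|H2] |].
  - contradiction.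
  - pose proof (Rabs_pos_lt _ H2); rewrite Rabs_R0; lra.
  - pose proof (Rabs_pos_lt _ H1); pose proof (Rabs_pos d2); lra.
Qed.

Lemma norm1_linf d : linf d origin <= norm1 d <= 2 * linf d origin.
Proof. unfold norm1, linf, origin; simpl; rewrite !Rminus_0_r; minmax_lra. Qed.

Definition closed_set (A : pt -> Prop) : Prop :=
  forall z, (forall eps, 0 < eps -> exists q, linf q z < eps /\ A q) -> A z.

Definition bounded (A : pt -> Prop) : Prop :=
  exists M, forall q, A q -> linf q origin <= M.

Lemma closed_bdry A z : closed_set A -> bdry A z -> A z.
Proof.
  intros HA Hz; apply HA; intros eps Heps.
  destruct (Hz eps Heps) as [[q [Hq Aq]] _]; exists q; rewrite linf_sym; auto.
Qed.

Lemma bdry_closed A : closed_set (bdry A).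
Proof.
  intros p H e He.
  destruct (H (e/2)) as [q [Hq Bq]]; [lra |].
  destruct (Bq (e/2)) as [[y1 [Hy1 Ay1]] [y2 [Hy2 Ay2]]]; [lra |].
  pose proof (linf_triangle p q y1); pose proof (linf_triangle p q y2).
  rewrite (linf_sym p q) in *.
  split; [exists y1 | exists y2]; split; auto; lra.
Qed.

Lemma robot_in_closed S : closed_set (robot_in S).
Proof.
  intros p H z Hz.
  destruct (H (1/2 - linf z p)) as [q [Hq Rq]]; [lra |].
  apply Rq; pose proof (linf_triangle z p q); rewrite (linf_sym p q) in *; lra.
Qed.

Lemma first_exit (P : R -> Prop) (B : R) : 0 <= B -> P 0 -> ~ P B ->
  exists t0, 0 <= t0 <= B /\ (forall s, 0 <= s < t0 -> P s) /\
    (forall eta, 0 < eta -> exists s, t0 <= s < t0 + eta /\ s <= B /\ ~ P s).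
Proof.
  intros HB P0 PB.
  set (E := fun t => 0 <= t <= B /\ forall s, 0 <= s <= t -> P s).
  assert (E0 : E 0).
  { split; [lra |]; intros s Hs; replace s with 0 by lra; auto. }
  assert (HEB : bound E) by (exists B; intros t [Ht _]; lra).
  destruct (completeness E HEB (ex_intro _ 0 E0)) as [t0 [Hub Hlub]].
  assert (Ht0 : 0 <= t0 <= B) by (split; [apply Hub, E0 | apply Hlub; intros t [Ht _]; lra]).
  assert (Hpre : forall s, 0 <= s < t0 -> P s).
  { intros s Hs; apply NNPP; intros Ps.
    assert (t0 <= s); [| lra].
    apply Hlub; intros t [_ Et]; apply Rnot_lt_le; intros Hst; apply Ps, Et; lra. }
  exists t0; split; [lra | split; [exact Hpre |]].
  intros eta Heta; apply NNPP; intros Hn.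
  assert (Hafter : forall s, t0 <= s < t0 + eta -> s <= B -> P s).
  { intros s Hs HsB; apply NNPP; intros Ps; apply Hn; exists s; auto. }
  destruct (Rlt_dec B (t0 + eta)) as [Hlt | Hge].
  - apply PB, Hafter; lra.
  - assert (E (t0 + eta/2)) as Emid.
    { split; [lra |]; intros s Hs.
      destruct (Rlt_dec s t0); [apply Hpre | apply Hafter]; lra. }
    pose proof (Hub _ Emid); lra.
Qed.

Lemma ray_adherent (A : pt -> Prop) p d t0 : 0 <= t0 -> A p ->
  (forall s, 0 <= s < t0 -> A (shift p s d)) ->
  forall eps, 0 < eps -> exists q, linf q (shift p t0 d) < eps /\ A q.
Proof.
  intros Ht0 Ap Hpre eps Heps.
  destruct (Req_dec t0 0) as [-> | Hnz].
  - exists p; rewrite shift_0, linf_pp; auto.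
  - set (eta := eps / (1 + linf d origin)).
    assert (0 < eta) by (apply Rdiv_lt_0_compat; pose proof (linf_ge0 d origin); lra).
    set (s := Rmax 0 (t0 - eta / 2)).
    exists (shift p s d); split.
    + apply linf_shift_lt; [lra |]; fold eta; unfold s, Rmax, Rabs; split_minmax; lra.
    + apply Hpre; unfold s, Rmax; split_minmax; lra.
Qed.

Lemma first_exit_along (A : pt -> Prop) p d B : 0 <= B -> A p -> ~ A (shift p B d) ->
  exists t0, 0 <= t0 <= B /\ (forall s, 0 <= s < t0 -> A (shift p s d)) /\
    bdry A (shift p t0 d).
Proof.
  intros HB Ap AB.
  destruct (first_exit (fun t => A (shift p t d)) B) as [t0 [Ht0 [Hpre Hpost]]];
    [exact HB | rewrite shift_0; exact Ap | exact AB |].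
  exists t0; split; [exact Ht0 | split; [exact Hpre |]].
  intros e He; split.
  - destruct (ray_adherent A p d t0 (proj1 Ht0) Ap Hpre e He) as [q [Hq Aq]].
    exists q; rewrite linf_sym; auto.
  - assert (Heta : 0 < e / (1 + linf d origin))
      by (apply Rdiv_lt_0_compat; pose proof (linf_ge0 d origin); lra).
    destruct (Hpost _ Heta) as [s [Hs [_ As]]].
    exists (shift p s d); split; [apply linf_shift_lt; [lra | minmax_lra] | exact As].
Qed.

Lemma robot_in_inner S x : robot_in S x -> inner S x.
Proof.
  intros Hx; split; [apply Hx; rewrite linf_pp; lra |].
  intros y Hy; apply Rnot_lt_le; intros Hyx.
  destruct (Hy (1/2 - linf y x)) as [_ [z [Hz Sz]]]; [lra |].
  apply Sz, Hx; pose proof (linf_triangle z y x); rewrite (linf_sym z y) in *; lra.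
Qed.

(* The first point outside S on the segment from x to q is a boundary point of S closer than 1/2
   to x. *)
Lemma inner_robot_in S x : inner S x -> robot_in S x.
Proof.
  intros [Sx Hfar] q Hq; apply NNPP; intros Sq.
  destruct (first_exit_along S x (diff q x) 1) as [t0 [Ht0 [_ Hbd]]];
    [lra | exact Sx | rewrite shift_diff; exact Sq |].
  pose proof (Hfar _ Hbd) as Hge; rewrite linf_shift_base in Hge.
  assert (Hd : linf (diff q x) origin = linf q x)
    by (unfold linf, diff, origin; simpl; rewrite !Rminus_0_r; reflexivity).
  rewrite Hd, Rabs_pos_eq in Hge by lra.
  pose proof (linf_ge0 q x); nra.
Qed.

Lemma inner_closed S : closed_set (inner S).
Proof.
  intros z Hz; apply robot_in_inner, robot_in_closed; intros eps Heps.
  destruct (Hz eps Heps) as [q [Hq Iq]]; exists q; split; [exact Hq | apply inner_robot_in, Iq].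
Qed.

Lemma bdry_inner_robot_in S x : bdry (inner S) x -> robot_in S x.
Proof. intros Hx; apply inner_robot_in, closed_bdry; [apply inner_closed | exact Hx]. Qed.

Definition max_linf (vs : list pt) : R :=
  fold_right (fun v m => Rmax (linf v origin) m) 0 vs.

Lemma max_linf_In vs v : In v vs -> linf v origin <= max_linf vs.
Proof.
  induction vs as [| a vs IH]; simpl; [tauto |].
  intros [-> | Hv]; [apply Rmax_l |].
  eapply Rle_trans; [apply IH, Hv | apply Rmax_r].
Qed.

Lemma max_linf_ge0 vs : 0 <= max_linf vs.
Proof. induction vs as [| a vs IH]; simpl; [lra | eapply Rle_trans; [exact IH | apply Rmax_r]]. Qed.

Lemma linf_on_seg a b x : on_seg a b x -> linf x origin <= Rmax (linf a origin) (linf b origin).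
Proof.
  intros [t [Ht ->]]; unfold linf, origin; simpl; rewrite !Rminus_0_r.
  unfold Rmax, Rabs; split_minmax; nra.
Qed.

Lemma poly_bd_bound vs x : poly_bd vs x -> linf x origin <= max_linf vs.
Proof.
  intros [i [Hi Hx]]; eapply Rle_trans; [apply (linf_on_seg _ _ _ Hx) |].
  apply Rmax_lub; apply max_linf_In, nth_In; [exact Hi |].
  apply Nat.mod_upper_bound; intros E; rewrite E in Hi; inversion Hi.
Qed.

(* Points beyond the vertices escape to infinity radially, without meeting the boundary. *)
Lemma outside_poly_region vs q : max_linf vs < linf q origin -> ~ poly_region vs q.
Proof.
  intros Hq.
  assert (Hfar : forall c, 1 <= c -> ~ poly_bd vs (scale c q)).
  { intros c Hc Hbd; apply poly_bd_bound in Hbd; rewrite linf_scale, Rabs_pos_eq in Hbd by lra.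
    pose proof (linf_ge0 q origin); nra. }
  assert (Hq1 : scale 1 q = q) by (destruct q; unfold scale; simpl; f_equal; ring).
  intros [Hbd | [_ Hin]]; [apply (Hfar 1); [lra | rewrite Hq1; exact Hbd] |].
  apply Hin; intros M.
  pose proof (max_linf_ge0 vs); pose proof (Rle_abs M).
  set (k := 1 + (Rabs M + 1) / linf q origin).
  assert (Hk : k * linf q origin = linf q origin + Rabs M + 1) by (unfold k; field; lra).
  assert (Hk1 : 1 <= k).
  { unfold k; pose proof (Rabs_pos M).
    assert (0 <= (Rabs M + 1) / linf q origin) by (left; apply Rdiv_lt_0_compat; lra); lra. }
  exists (scale k q); split; [rewrite linf_scale, Rabs_pos_eq; lra |].
  exists nil; simpl; split; [| exact I].
  intros z [t [Ht ->]].
  replace (_, _) with (scale (1 + t * (k - 1)) q) by (unfold scale; simpl; f_equal; ring).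
  apply Hfar; nra.
Qed.

Lemma polygonal_domain_bounded S : polygonal_domain S -> bounded S.
Proof.
  intros [outer [holes [_ [_ [_ [_ HS]]]]]].
  exists (max_linf outer); intros q Sq; apply Rnot_lt_le; intros Hq.
  apply (outside_poly_region outer q Hq), HS, Sq.
Qed.

Lemma bounded_sub (A B : pt -> Prop) : bounded B -> (forall q, A q -> B q) -> bounded A.
Proof. intros [M HM] HAB; exists M; auto. Qed.

Lemma bounded_ray_exits (A : pt -> Prop) p d : bounded A -> A p -> 0 < linf d origin ->
  exists B, 0 <= B /\ ~ A (shift p B d).
Proof.
  intros [M HM] Ap Hd.
  pose proof (HM p Ap); pose proof (linf_ge0 p origin).
  set (B := (M + 1 + linf p origin) / linf d origin).
  assert (HB : B * linf d origin = M + 1 + linf p origin) by (unfold B; field; lra).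
  assert (0 <= B) by (left; apply Rdiv_lt_0_compat; lra).
  exists B; split; [assumption | intros AB].
  pose proof (HM _ AB); pose proof (linf_triangle (shift p B d) origin p).
  rewrite linf_shift_base, Rabs_pos_eq, (linf_sym origin p) in * by assumption; lra.
Qed.

Lemma ray_to_boundary (A : pt -> Prop) p d : closed_set A -> bounded A -> A p ->
  0 < linf d origin ->
  exists t, 0 <= t /\ (forall s, 0 <= s <= t -> A (shift p s d)) /\ bdry A (shift p t d).
Proof.
  intros HA Hb Ap Hd.
  destruct (bounded_ray_exits A p d Hb Ap Hd) as [B [HB AB]].
  destruct (first_exit_along A p d B HB Ap AB) as [t [Ht [Hpre Hbd]]].
  exists t; split; [lra | split; [| exact Hbd]].
  intros s Hs; destruct (Req_dec s t) as [-> | Hne]; [| apply Hpre; lra].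
  apply closed_bdry; assumption.
Qed.

(* [vertex_of A p] unfolds to [bdry A p /\ ~ locally_line (bdry A) p]. *)
Definition locally_line (C : pt -> Prop) (p : pt) : Prop :=
  exists e (d : pt), 0 < e /\ d <> origin /\
    forall q, linf q p < e -> (C q <-> exists t, q = shift p t d).

Lemma unit_direction d e : d <> origin ->
  exists k, norm1 (scale k d) = 1 /\ 0 <= dot (scale k d) e.
Proof.
  intros Hd; pose proof (norm1_pos d Hd) as Hn.
  assert (Hnorm : forall k, norm1 (scale k d) = Rabs k * norm1 d)
    by (intros k; unfold norm1, scale; simpl; rewrite !Rabs_mult; ring).
  assert (Hdot : forall k, dot (scale k d) e = k * dot d e)
    by (intros k; unfold dot, scale; simpl; ring).
  destruct (Rle_dec 0 (dot d e)); [exists (/ norm1 d) | exists (- / norm1 d)];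
    rewrite Hnorm, Hdot; [rewrite Rabs_pos_eq | rewrite Rabs_Ropp, Rabs_pos_eq];
    pose proof (Rinv_0_lt_compat _ Hn); try split; try field; nra.
Qed.

(* The line of C through x must carry the incoming segment, hence also its continuation. *)
Lemma locally_line_extend C x u delta : 0 < delta -> locally_line C x ->
  (forall s, 0 < s < delta -> C (shift x (- s) u)) ->
  exists eta, 0 < eta /\ forall r, Rabs r < eta -> C (shift x r u).
Proof.
  intros Hdelta [e [d [He [_ Hline]]]] Hback.
  assert (Hnear : forall r, Rabs r < e / (1 + linf u origin) -> linf (shift x r u) x < e).
  { intros r Hr; rewrite <- (shift_0 x u) at 2.
    apply linf_shift_lt; [exact He | rewrite Rminus_0_r; exact Hr]. }
  set (eta := e / (1 + linf u origin)).
  assert (Heta : 0 < eta) by (apply Rdiv_lt_0_compat; pose proof (linf_ge0 u origin); lra).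
  set (s := Rmin delta eta / 2).
  assert (Hs : 0 < s < delta /\ s < eta) by (unfold s, Rmin; split_minmax; lra).
  assert (Hsnear : Rabs (- s) < eta) by (rewrite Rabs_Ropp, Rabs_pos_eq; lra).
  destruct (proj1 (Hline _ (Hnear _ Hsnear))) as [t Ht]; [apply Hback; lra |].
  exists eta; split; [exact Heta |]; intros r Hr; apply Hline; [apply Hnear, Hr |].
  exists (- r / s * t); rewrite <- (shift_proportional _ _ _ _ _ (- r / s) Ht).
  f_equal; field; lra.
Qed.

Lemma slide_to_corner C b e : closed_set C -> bounded C -> C b -> norm1 e = 1 ->
  exists t u, 0 <= t /\ norm1 u = 1 /\ 0 <= dot u e /\
    (forall s, 0 <= s <= t -> C (shift b s u)) /\ ~ locally_line C (shift b t u).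
Proof.
  intros HC Hb Cb He.
  destruct (classic (locally_line C b)) as [[r [d [Hr [Hd Hline]]]] | Hcorner].
  2: { exists 0, e; rewrite shift_0; unfold dot.
       split; [lra | split; [exact He | split; [nra | split; [| exact Hcorner]]]].
       intros s Hs; replace s with 0 by lra; rewrite shift_0; exact Cb. }
  destruct (unit_direction d e Hd) as [k [Hu Hue]]; set (u := scale k d) in *.
  assert (Hu0 : 0 < linf u origin) by (pose proof (norm1_linf u); lra).
  set (eta := r / (1 + linf u origin)).
  assert (Heta : 0 < eta) by (apply Rdiv_lt_0_compat; lra).
  assert (Hnear : forall s, Rabs s < eta -> C (shift b s u)).
  { intros s Hs; apply Hline; [| exists (s * k); apply shift_scale].
    rewrite <- (shift_0 b u) at 2; apply linf_shift_lt; [exact Hr | rewrite Rminus_0_r; exact Hs]. }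
  destruct (bounded_ray_exits C b u Hb Cb Hu0) as [B [HB CB]].
  destruct (first_exit (fun t => C (shift b t u)) B) as [t0 [Ht0 [Hpre Hpost]]];
    [exact HB | rewrite shift_0; exact Cb | exact CB |].
  assert (Ht0pos : 0 < t0).
  { destruct (Hpost eta Heta) as [s [Hs [_ Cs]]].
    apply Rnot_le_lt; intros Ht0'; apply Cs, Hnear, Rabs_def1; lra. }
  assert (Ct0 : C (shift b t0 u)) by (apply HC, ray_adherent; auto; lra).
  exists t0, u; split; [lra | split; [exact Hu | split; [exact Hue | split]]].
  - intros s Hs; destruct (Req_dec s t0) as [-> | Hne]; [exact Ct0 | apply Hpre; lra].
  - intros Hl.
    destruct (locally_line_extend C _ u t0 Ht0pos Hl) as [eta' [Heta' Hext]].
    { intros s Hs; rewrite shift_shift; apply Hpre; lra. }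
    destruct (Hpost eta' Heta') as [s [Hs [_ Cs]]]; apply Cs.
    replace s with (t0 + (s - t0)) by ring; rewrite <- shift_shift.
    apply Hext, Rabs_def1; lra.
Qed.

Definition two_leg (p e u : pt) (t1 t2 t : R) : pt :=
  shift (shift p (Rmin t t1) e) (Rmin (Rmax 0 (t - t1)) t2) u.

Lemma two_leg_first p e u t1 t2 t : 0 <= t2 -> t <= t1 -> two_leg p e u t1 t2 t = shift p t e.
Proof.
  intros H2 Ht; unfold two_leg.
  rewrite Rmin_left, (Rmax_left 0), Rmin_left, shift_0 by lra; reflexivity.
Qed.

Lemma two_leg_second p e u t1 t2 t : t1 <= t <= t1 + t2 ->
  two_leg p e u t1 t2 t = shift (shift p t1 e) (t - t1) u.
Proof.
  intros Ht; unfold two_leg; rewrite Rmin_right, Rmax_right, Rmin_left by lra; reflexivity.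
Qed.

Lemma two_leg_end p e u t1 t2 t : 0 <= t2 -> t1 + t2 <= t ->
  two_leg p e u t1 t2 t = shift (shift p t1 e) t2 u.
Proof.
  intros H2 Ht; unfold two_leg; rewrite Rmin_right, Rmax_right, Rmin_right by lra; reflexivity.
Qed.

Lemma two_leg_start p e u t1 t2 : 0 <= t1 -> 0 <= t2 -> two_leg p e u t1 t2 0 = p.
Proof. intros H1 H2; rewrite two_leg_first by assumption; apply shift_0. Qed.

Lemma l1_shift2 p a a' c c' e u :
  l1 (shift (shift p a e) c u) (shift (shift p a' e) c' u) <=
  Rabs (a - a') * norm1 e + Rabs (c - c') * norm1 u.
Proof.
  assert (Htri : forall x y z w, Rabs (x * y + z * w) <= Rabs x * Rabs y + Rabs z * Rabs w)
    by (intros; rewrite <- !Rabs_mult; apply Rabs_triang).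
  pose proof (Htri (a - a') (fst e) (c - c') (fst u)).
  pose proof (Htri (a - a') (snd e) (c - c') (snd u)).
  unfold l1, shift, norm1; simpl.
  replace (fst p + a * fst e + c * fst u - (fst p + a' * fst e + c' * fst u))
    with ((a - a') * fst e + (c - c') * fst u) by ring.
  replace (snd p + a * snd e + c * snd u - (snd p + a' * snd e + c' * snd u))
    with ((a - a') * snd e + (c - c') * snd u) by ring.
  lra.
Qed.

Lemma two_leg_lipschitz p e u t1 t2 s t : 0 <= t2 -> norm1 e <= 1 -> norm1 u <= 1 ->
  l1 (two_leg p e u t1 t2 s) (two_leg p e u t1 t2 t) <= Rabs (s - t).
Proof.
  intros H2 He Hu; unfold two_leg; eapply Rle_trans; [apply l1_shift2 |].
  assert (Hclamp : Rabs (Rmin s t1 - Rmin t t1) +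
    Rabs (Rmin (Rmax 0 (s - t1)) t2 - Rmin (Rmax 0 (t - t1)) t2) <= Rabs (s - t))
    by (unfold Rmin, Rmax, Rabs; split_minmax; lra).
  pose proof (Rabs_pos (Rmin s t1 - Rmin t t1)).
  pose proof (Rabs_pos (Rmin (Rmax 0 (s - t1)) t2 - Rmin (Rmax 0 (t - t1)) t2)).
  pose proof (Rabs_pos (fst e)); pose proof (Rabs_pos (snd e)).
  pose proof (Rabs_pos (fst u)); pose proof (Rabs_pos (snd u)).
  unfold norm1 in *; nra.
Qed.

Lemma on_seg_shift p t d s : 0 <= s <= t -> on_seg p (shift p t d) (shift p s d).
Proof.
  intros Hs; unfold on_seg, shift; simpl.
  destruct (Req_dec t 0) as [-> | Ht].
  - exists 0; split; [lra |]; replace s with 0 by lra; f_equal; ring.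
  - assert (Hinv : t * / t = 1) by (field; exact Ht).
    assert (0 < / t) by (apply Rinv_0_lt_compat; lra).
    exists (s / t); unfold Rdiv; split; [split; nra |].
    f_equal; field; exact Ht.
Qed.

Lemma on_seg_shift_inv p t d z : 0 <= t -> on_seg p (shift p t d) z ->
  exists s, 0 <= s <= t /\ z = shift p s d.
Proof.
  intros Ht [l [Hl ->]]; exists (l * t); split; [nra |].
  unfold shift; simpl; f_equal; ring.
Qed.

Lemma two_leg_image p e u t1 t2 T x : 0 <= t1 -> 0 <= t2 -> t1 + t2 <= T ->
  image T (two_leg p e u t1 t2) x <->
  chain_pts [p; shift p t1 e; shift (shift p t1 e) t2 u] x.
Proof.
  intros H1 H2 HT; simpl; split.
  - intros [t [Ht ->]].
    destruct (Rle_dec t t1); [| destruct (Rle_dec t (t1 + t2))].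
    + left; rewrite two_leg_first by lra; apply on_seg_shift; lra.
    + right; left; rewrite two_leg_second by lra; apply on_seg_shift; lra.
    + right; right; apply two_leg_end; lra.
  - intros [Hx | [Hx | ->]].
    + destruct (on_seg_shift_inv _ _ _ _ H1 Hx) as [s [Hs ->]].
      exists s; split; [lra | symmetry; apply two_leg_first; lra].
    + destruct (on_seg_shift_inv _ _ _ _ H2 Hx) as [s [Hs ->]].
      exists (t1 + s); split; [lra |].
      rewrite two_leg_second by lra; f_equal; ring.
    + exists (t1 + t2); split; [lra | symmetry; apply two_leg_end; lra].
Qed.

Lemma two_leg_trajectory p e u t1 t2 T : 0 <= t1 -> 0 <= t2 -> t1 + t2 <= T ->
  norm1 e <= 1 -> norm1 u <= 1 -> trajectory T (two_leg p e u t1 t2).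
Proof.
  intros H1 H2 HT He Hu; split.
  - intros s t _ _; apply two_leg_lipschitz; assumption.
  - eexists; intros x; apply two_leg_image; assumption.
Qed.

Definition on_line (a d z : pt) : Prop := cross (diff z a) d = 0.

Lemma two_leg_on_lines p e u t1 t2 T z : 0 <= t2 -> image T (two_leg p e u t1 t2) z ->
  on_line p e z \/ on_line (shift p t1 e) u z.
Proof.
  intros H2 [t [_ ->]]; unfold on_line, cross, diff.
  destruct (Rle_dec t t1); [left; rewrite two_leg_first by lra | right].
  - unfold shift; simpl; ring.
  - destruct (Rle_dec t (t1 + t2));
      [rewrite two_leg_second by lra | rewrite two_leg_end by lra];
      unfold shift; simpl; ring.
Qed.

Lemma affine_zero_or a b c d : (forall l, 0 <= l <= 1 -> a + b * l = 0 \/ c + d * l = 0) ->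
  (a = 0 /\ b = 0) \/ (c = 0 /\ d = 0).
Proof.
  intros H.
  destruct (H 0), (H (1/2)), (H 1); try lra; first [left; split; lra | right; split; lra].
Qed.

Lemma segment_on_two_lines a e c u x w :
  (forall z, on_seg x w z -> on_line a e z \/ on_line c u z) ->
  (on_line a e x /\ on_line x e w) \/ (on_line c u x /\ on_line x u w).
Proof.
  intros H; unfold on_line, cross, diff; simpl; apply affine_zero_or.
  intros l Hl; destruct (H (fst x + l * (fst w - fst x), snd x + l * (snd w - snd x)))
    as [E | E]; [exists l; auto | left | right];
    unfold on_line, cross, diff in E; simpl in E; rewrite <- E; ring.
Qed.

Lemma cross_parallel w v e : e <> origin -> cross w e = 0 -> cross v e = 0 -> cross w v = 0.
Proof.
  destruct e as [e1 e2], w as [w1 w2], v as [v1 v2]; unfold cross, origin; simpl.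
  intros He Hw Hv.
  assert (E1 : e1 * (w1 * v2 - w2 * v1) = v1 * (w1 * e2 - w2 * e1) - w1 * (v1 * e2 - v2 * e1))
    by ring.
  assert (E2 : e2 * (w1 * v2 - w2 * v1) = v2 * (w1 * e2 - w2 * e1) - w2 * (v1 * e2 - v2 * e1))
    by ring.
  rewrite Hw, Hv in E1, E2.
  destruct (Req_dec e1 0) as [-> | H1]; [destruct (Req_dec e2 0) as [-> | H2] |].
  - contradiction.
  - apply (Rmult_eq_reg_l e2); [lra | exact H2].
  - apply (Rmult_eq_reg_l e1); [lra | exact H1].
Qed.

Lemma cross_independent a e u : cross e u <> 0 -> cross a e = 0 -> cross a u = 0 -> a = origin.
Proof.
  destruct a as [a1 a2], e as [e1 e2], u as [u1 u2]; unfold cross, origin; simpl.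
  intros Heu Ha Hb.
  assert (E1 : a1 * (e1 * u2 - e2 * u1) = e1 * (a1 * u2 - a2 * u1) - u1 * (a1 * e2 - a2 * e1))
    by ring.
  assert (E2 : a2 * (e1 * u2 - e2 * u1) = e2 * (a1 * u2 - a2 * u1) - u2 * (a1 * e2 - a2 * e1))
    by ring.
  rewrite Ha, Hb in E1, E2.
  f_equal; apply (Rmult_eq_reg_r (e1 * u2 - e2 * u1)); lra.
Qed.

Lemma turn_between_lines a e c u x w v : e <> origin -> u <> origin ->
  on_line a e c -> on_line a e x -> on_line x e w -> on_line c u x -> on_line x u v ->
  cross (diff w x) (diff v x) <> 0 -> x = c /\ cross e u <> 0.
Proof.
  unfold on_line; intros He Hu Hc Hx Hw Hxc Hv Hwv.
  assert (Heu : cross e u <> 0).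
  { intros Heu; apply Hwv, (cross_parallel _ _ e He Hw).
    apply (cross_parallel _ _ u Hu Hv); unfold cross in *; lra. }
  split; [| exact Heu].
  assert (Hxe : cross (diff x c) e = 0) by (unfold cross, diff in *; simpl in *; lra).
  pose proof (cross_independent _ _ _ Heu Hxe Hxc) as E.
  destruct x, c; unfold diff, origin in E; injection E as E1 E2; f_equal; lra.
Qed.

Lemma two_leg_turn p e u t1 t2 T x : 0 <= t2 -> e <> origin -> u <> origin ->
  turn T (two_leg p e u t1 t2) x -> x = shift p t1 e /\ cross e u <> 0.
Proof.
  intros H2 He Hu [_ [w [v [_ [_ [Hw [Hv Hwv]]]]]]].
  assert (Hc : on_line p e (shift p t1 e)) by (unfold on_line, cross, diff, shift; simpl; ring).
  assert (Hseg : forall y, (forall z, on_seg x y z -> image T (two_leg p e u t1 t2) z) ->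
    (on_line p e x /\ on_line x e y) \/ (on_line (shift p t1 e) u x /\ on_line x u y)).
  { intros y Hy; apply segment_on_two_lines; intros z Hz.
    apply (two_leg_on_lines p e u t1 t2 T); [exact H2 | apply Hy, Hz]. }
  change (cross (diff w x) (diff v x) <> 0) in Hwv.
  destruct (Hseg w Hw) as [[Hx1 Hw1] | [Hx2 Hw2]], (Hseg v Hv) as [[Hx1' Hv1] | [Hx2' Hv2]].
  - exfalso; apply Hwv, (cross_parallel _ _ e); assumption.
  - apply (turn_between_lines p e _ u x w v); assumption.
  - apply (turn_between_lines p e _ u x v w); try assumption.
    unfold cross in *; lra.
  - exfalso; apply Hwv, (cross_parallel _ _ u); assumption.
Qed.

Lemma two_leg_at_most_one_turn p e u t1 t2 T : 0 <= t2 -> e <> origin -> u <> origin ->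
  at_most_one_turn T (two_leg p e u t1 t2).
Proof.
  intros H2 He Hu x y Hx Hy.
  rewrite (proj1 (two_leg_turn _ _ _ _ _ _ _ H2 He Hu Hx)).
  rewrite (proj1 (two_leg_turn _ _ _ _ _ _ _ H2 He Hu Hy)); reflexivity.
Qed.

Lemma two_leg_straight_no_turn p e t1 t2 T : 0 <= t2 -> e <> origin ->
  no_turn T (two_leg p e e t1 t2).
Proof.
  intros H2 He x Hx; apply (proj2 (two_leg_turn _ _ _ _ _ _ _ H2 He He Hx)).
  unfold cross; ring.
Qed.

Lemma norm1_unit_nonzero d : norm1 d = 1 -> d <> origin.
Proof. intros Hd ->; unfold norm1, origin in Hd; simpl in Hd; rewrite Rabs_R0 in Hd; lra. Qed.

Lemma dot_shift p a d v : dot (shift p a d) v = dot p v + a * dot d v.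
Proof. unfold dot, shift; simpl; ring. Qed.

Lemma dot_diff a b v : dot (diff a b) v = dot a v + dot b (opp v).
Proof. unfold dot, diff, opp; simpl; ring. Qed.

Lemma two_leg_dot_mono p e u t1 t2 t v : 0 <= t1 -> 0 <= t2 -> 0 <= t ->
  0 <= dot e v -> 0 <= dot u v -> dot p v <= dot (two_leg p e u t1 t2 t) v.
Proof.
  intros H1 H2 Ht Hev Huv; unfold two_leg; rewrite !dot_shift.
  assert (0 <= Rmin t t1) by (apply Rmin_glb; assumption).
  assert (0 <= Rmin (Rmax 0 (t - t1)) t2) by (apply Rmin_glb; [apply Rmax_l | assumption]).
  nra.
Qed.

Definition axis (e : pt) : Prop := e = (1, 0) \/ e = (-1, 0) \/ e = (0, 1) \/ e = (0, -1).

Lemma axis_opp e : axis e -> axis (opp e).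
Proof.
  unfold axis, opp; intros [-> | [-> | [-> | ->]]];
    [right; left | left | right; right; right | right; right; left]; simpl; f_equal; ring.
Qed.

Lemma axis_norm1 e : axis e -> norm1 e = 1.
Proof.
  unfold norm1; intros [-> | [-> | [-> | ->]]]; simpl; unfold Rabs; split_minmax; lra.
Qed.

Lemma dot_axis_le_linf e p q : axis e -> dot (diff p q) e <= linf p q.
Proof. unfold dot, diff; intros [-> | [-> | [-> | ->]]]; simpl; minmax_lra. Qed.

Lemma linf_separating_axis p q : 1 <= linf p q -> exists e, axis e /\ 1 <= dot (diff p q) e.
Proof.
  unfold axis, dot, diff; simpl; intros H; unfold linf, Rmax, Rabs in H; split_minmax;
    first [ exists (1, 0); simpl; split; [tauto | lra]
          | exists (-1, 0); simpl; split; [tauto | lra]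
          | exists (0, 1); simpl; split; [tauto | lra]
          | exists (0, -1); simpl; split; [tauto | lra] ].
Qed.

Lemma commonly_ordered_axis e p1 p2 q1 q2 : axis e ->
  1 <= dot (diff p1 p2) e -> 1 <= dot (diff q1 q2) e -> commonly_ordered p1 p2 q1 q2.
Proof.
  unfold commonly_ordered, dot, diff; intros [-> | [-> | [-> | ->]]]; simpl; lra.
Qed.

Definition route (S : pt -> Prop) (p e u : pt) (t1 t2 : R) : Prop :=
  0 <= t1 /\ 0 <= t2 /\
  (forall s, 0 <= s <= t1 -> robot_in S (shift p s e)) /\
  (forall s, 0 <= s <= t2 -> robot_in S (shift (shift p t1 e) s u)).

Lemma route_robot_in S p e u t1 t2 t : route S p e u t1 t2 -> 0 <= t ->
  robot_in S (two_leg p e u t1 t2 t).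
Proof.
  intros [H1 [H2 [Leg1 Leg2]]] Ht.
  destruct (Rle_dec t t1); [rewrite two_leg_first by lra; apply Leg1; lra |].
  destruct (Rle_dec t (t1 + t2));
    [rewrite two_leg_second by lra | rewrite two_leg_end by lra]; apply Leg2; lra.
Qed.

Lemma normalizable_by_routes S (Endpt : pt -> Prop) (TurnOK : R -> (R -> pt) -> Prop)
    p1 p2 e u1 u2 t1 t2 t1' t2' :
  axis e -> 1 <= dot (diff p1 p2) e ->
  route S p1 e u1 t1 t2 -> route S p2 (opp e) u2 t1' t2' ->
  norm1 u1 = 1 -> norm1 u2 = 1 -> 0 <= dot u1 e -> 0 <= dot u2 (opp e) ->
  (forall T, TurnOK T (two_leg p1 e u1 t1 t2)) ->
  (forall T, TurnOK T (two_leg p2 (opp e) u2 t1' t2')) ->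
  Endpt (shift (shift p1 t1 e) t2 u1) -> Endpt (shift (shift p2 t1' (opp e)) t2' u2) ->
  normalizable S (fun q1 q2 => config_in S q1 q2 /\ Endpt q1 /\ Endpt q2) TurnOK p1 p2.
Proof.
  intros He Hsep R1 R2 Hu1 Hu2 Hue1 Hue2 Turn1 Turn2 End1 End2.
  pose proof R1 as [H1 [H2 _]]; pose proof R2 as [H1' [H2' _]].
  set (m1 := two_leg p1 e u1 t1 t2); set (m2 := two_leg p2 (opp e) u2 t1' t2').
  pose proof (Rmax_l (t1 + t2) (t1' + t2')); pose proof (Rmax_r (t1 + t2) (t1' + t2')).
  set (T := Rmax (t1 + t2) (t1' + t2')) in *.
  assert (Hnorm : norm1 e = 1 /\ norm1 (opp e) = 1)
    by (split; apply axis_norm1; [| apply axis_opp]; exact He).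
  assert (Hee : 0 <= dot e e /\ 0 <= dot (opp e) (opp e)) by (unfold dot; split; nra).
  assert (Hapart : forall t, 0 <= t -> 1 <= dot (diff (m1 t) (m2 t)) e).
  { intros t Ht; rewrite dot_diff; rewrite dot_diff in Hsep.
    pose proof (two_leg_dot_mono p1 e u1 t1 t2 t e H1 H2 Ht (proj1 Hee) Hue1).
    pose proof (two_leg_dot_mono p2 (opp e) u2 t1' t2' t (opp e) H1' H2' Ht (proj2 Hee) Hue2).
    unfold m1, m2; lra. }
  assert (Hconf : forall t, 0 <= t -> config_in S (m1 t) (m2 t)).
  { intros t Ht; split; [eapply Rle_trans; [apply Hapart, Ht | apply dot_axis_le_linf, He] |].
    split; apply route_robot_in; assumption. }
  assert (Hend : m1 T = shift (shift p1 t1 e) t2 u1 /\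
                 m2 T = shift (shift p2 t1' (opp e)) t2' u2)
    by (split; apply two_leg_end; assumption).
  exists T, m1, m2; split; [lra |].
  split; [apply two_leg_trajectory; lra |].
  split; [apply two_leg_trajectory; lra |].
  split; [apply Turn1 | split; [apply Turn2 |]].
  split; [apply two_leg_start; assumption | split; [apply two_leg_start; assumption |]].
  split; [intros t Ht; apply Hconf, Ht |].
  split; [split; [apply Hconf; lra | rewrite (proj1 Hend), (proj2 Hend); split; assumption] |].
  apply (commonly_ordered_axis e); [exact He | exact Hsep | apply Hapart; lra].
Qed.

Lemma boundary_route S p e : polygonal_domain S -> robot_in S p -> norm1 e = 1 ->
  exists t1, route S p e e t1 0 /\ bdry (inner S) (shift p t1 e).
Proof.
  intros HS Rp He.
  assert (Hb : bounded (inner S))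
    by (apply (bounded_sub _ S); [apply polygonal_domain_bounded, HS | intros q [Sq _]; exact Sq]).
  assert (He0 : 0 < linf e origin) by (pose proof (norm1_linf e); lra).
  destruct (ray_to_boundary (inner S) p e (inner_closed S) Hb (robot_in_inner S p Rp) He0)
    as [t1 [Ht1 [Leg Hbd]]].
  exists t1; split; [| exact Hbd].
  split; [exact Ht1 | split; [lra | split]]; intros s Hs.
  - apply inner_robot_in, Leg, Hs.
  - replace s with 0 by lra; rewrite shift_0; apply inner_robot_in, Leg; lra.
Qed.

Lemma corner_route S p e : polygonal_domain S -> robot_in S p -> norm1 e = 1 ->
  exists t1 t2 u, route S p e u t1 t2 /\ norm1 u = 1 /\ 0 <= dot u e /\
    vertex_of (inner S) (shift (shift p t1 e) t2 u).
Proof.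
  intros HS Rp He.
  destruct (boundary_route S p e HS Rp He) as [t1 [[Ht1 [_ [Leg1 _]]] Hbd]].
  assert (Hb : bounded (bdry (inner S))).
  { apply (bounded_sub _ S); [apply polygonal_domain_bounded, HS |].
    intros q Hq; apply (bdry_inner_robot_in S q Hq); rewrite linf_pp; lra. }
  destruct (slide_to_corner _ _ e (bdry_closed (inner S)) Hb Hbd He)
    as [t2 [u [Ht2 [Hu [Hue [Leg2 Hcorner]]]]]].
  exists t1, t2, u; split; [| split; [exact Hu | split; [exact Hue |]]].
  - split; [exact Ht1 | split; [exact Ht2 | split; [exact Leg1 |]]].
    intros s Hs; apply bdry_inner_robot_in, Leg2, Hs.
  - split; [apply Leg2; lra | exact Hcorner].
Qed.

Lemma boundary_normalization S p1 p2 : polygonal_domain S -> config_in S p1 p2 ->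
  normalizable S (boundary_config S) no_turn p1 p2.
Proof.
  intros HS [Hd [R1 R2]].
  destruct (linf_separating_axis p1 p2 Hd) as [e [He Hsep]].
  pose proof (axis_norm1 e He) as Hn; pose proof (axis_norm1 _ (axis_opp e He)) as Hn'.
  destruct (boundary_route S p1 e HS R1 Hn) as [t1 [Hr1 B1]].
  destruct (boundary_route S p2 (opp e) HS R2 Hn') as [t1' [Hr2 B2]].
  apply (normalizable_by_routes S _ _ p1 p2 e e (opp e) t1 0 t1' 0);
    rewrite ?shift_0; try assumption; try (unfold dot; nra).
  all: intros T; apply two_leg_straight_no_turn; [lra | apply norm1_unit_nonzero; assumption].
Qed.

Lemma corner_normalization S p1 p2 : polygonal_domain S -> config_in S p1 p2 ->
  normalizable S (corner_config S) at_most_one_turn p1 p2.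
Proof.
  intros HS [Hd [R1 R2]].
  destruct (linf_separating_axis p1 p2 Hd) as [e [He Hsep]].
  pose proof (axis_norm1 e He) as Hn; pose proof (axis_norm1 _ (axis_opp e He)) as Hn'.
  destruct (corner_route S p1 e HS R1 Hn) as [t1 [t2 [u1 [Hr1 [Hu1 [Hue1 V1]]]]]].
  destruct (corner_route S p2 (opp e) HS R2 Hn') as [t1' [t2' [u2 [Hr2 [Hu2 [Hue2 V2]]]]]].
  apply (normalizable_by_routes S _ _ p1 p2 e u1 u2 t1 t2 t1' t2'); try assumption;
    intros T; apply two_leg_at_most_one_turn; try (apply norm1_unit_nonzero; assumption).
  - apply Hr1.
  - apply Hr2.
Qed.

Theorem lemma7p1 (S : pt -> Prop) (p1 p2 : pt) :
  polygonal_domain S -> config_in S p1 p2 ->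
  normalizable S (boundary_config S) no_turn p1 p2 /\
  normalizable S (corner_config S) at_most_one_turn p1 p2.
Proof.
  intros HS HP; split; [apply boundary_normalization | apply corner_normalization]; assumption.
Qed.
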